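(* Let $M$ be a matroid flock on a finite set $E$, let $\alpha\in\mathbb{Z}^E$ and let $I\subseteq J\subseteq E$. Then $r_\alpha(J)=r_\alpha(I)+r_{\alpha+e_I}(J\setminus I)$.
   Context: $e_I:=\sum_{i\in I}e_i$ ($e_i$ unit vectors in $\mathbb{Z}^E$), $\mathbf{1}:=e_E$. A matroid flock of rank $d$ on $E$ is a map $M$ assigning to each $\alpha\in\mathbb{Z}^E$ a matroid $M_\alpha$ on $E$ of rank $d$ with (MF1) $M_\alpha/i=M_{\alpha+e_i}\setminus i$ for all $\alpha$, $i\in E$ (contraction, deletion); and (MF2) $M_\alpha=M_{\alpha+\mathbf{1}}$ for all $\alpha$. $r_\alpha$ denotes the rank function of $M_\alpha$. *)

From mathcomp Require Import all_boot all_order all_algebra.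
Set Implicit Arguments. Unset Strict Implicit. Unset Printing Implicit Defensive.
Import GRing.Theory.
Local Open Scope ring_scope.

Section Matroids.
Variable E : finType.

Definition is_matroid (Ind : {set {set E}}) : Prop :=
  [/\ set0 \in Ind,
      (forall A B : {set E}, B \in Ind -> A \subset B -> A \in Ind) &
      (forall A B : {set E}, A \in Ind -> B \in Ind -> (#|A| < #|B|)%N ->
          exists2 x, x \in B :\: A & x |: A \in Ind)].

Definition mrank (Ind : {set {set E}}) (A : {set E}) : nat :=
  \max_(B in Ind | B \subset A) #|B|.

(* deletion M \ i (a matroid on E \ {i}, encoded by its independent sets) *)
Definition mdelete (Ind : {set {set E}}) (i : E) : {set {set E}} :=
  [set B in Ind | i \notin B].

(* contraction M / i (a matroid on E \ {i}); if i is a loop, M/i = M\i *)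
Definition mcontract (Ind : {set {set E}}) (i : E) : {set {set E}} :=
  if [set i] \in Ind then [set B : {set E} | (i \notin B) && ((i |: B) \in Ind)]
  else mdelete Ind i.

Definition eI (I : {set E}) : {ffun E -> int} := [ffun j => ((j \in I) : nat)%:Z].

Definition matroid_flock (d : nat) (M : {ffun E -> int} -> {set {set E}}) : Prop :=
  [/\ (forall a, is_matroid (M a) /\ mrank (M a) setT = d),
      (forall a i, mcontract (M a) i = mdelete (M (a + eI [set i])) i) &
      (forall a, M a = M (a + eI setT))].
End Matroids.

From mathcomp Require Import all_boot all_order all_algebra.
Set Implicit Arguments. Unset Strict Implicit. Unset Printing Implicit Defensive.
Import GRing.Theory.
Local Open Scope ring_scope.

(* Removing one element at a time, it suffices to show
   r_a(J) = r_a({i}) + r_{a+e_i}(J \ {i}) for i in J.  By (MF1) the second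
   rank is that of the contraction M_a / i, and the identity is the usual
   rank formula for contracting a single element: a loop contributes nothing,
   and for a non-loop i every basis of J through i (which exists by
   augmentation) loses exactly i in M_a / i. *)

Section MatroidRank.
Variable E : finType.
Implicit Types (Ind : {set {set E}}) (A B C J : {set E}).

Lemma mrank_ge Ind A B : B \in Ind -> B \subset A -> (#|B| <= mrank Ind A)%N.
Proof. by move=> BI BA; rewrite /mrank (leq_bigmax_cond (F := fun B => #|B|)) ?BI. Qed.

Lemma mrankP Ind A n :
    (exists2 B, (B \in Ind) && (B \subset A) & #|B| = n) ->
    (forall B, B \in Ind -> B \subset A -> (#|B| <= n)%N) ->
  mrank Ind A = n.
Proof.
move=> [B /andP[BI BA] <-] ub; apply/eqP; rewrite eqn_leq mrank_ge // andbT.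
by apply/bigmax_leqP => C /andP[]; apply: ub.
Qed.

Lemma mrank_delete Ind (i : E) A : i \notin A -> mrank (mdelete Ind i) A = mrank Ind A.
Proof.
move=> iA; apply: eq_bigl => B; rewrite inE -andbA; congr (_ && _).
case: (boolP (B \subset A)) => [/subsetP BA|]; rewrite ?andbF // andbT.
by apply: contraNN iA; apply: BA.
Qed.

Lemma mrank_set0 Ind : mrank Ind set0 = 0%N.
Proof.
apply/eqP; rewrite -leqn0; apply/bigmax_leqP => B /andP[_].
by rewrite subset0 => /eqP ->; rewrite cards0.
Qed.

Section Matroid.
Variable Ind : {set {set E}}.
Hypothesis Ind_matroid : is_matroid Ind.

Lemma set0_indep : set0 \in Ind.
Proof. by case: Ind_matroid. Qed.

Lemma indep_sub A B : B \in Ind -> A \subset B -> A \in Ind.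
Proof. by case: Ind_matroid => _ sub _; apply: sub. Qed.

Lemma indep_augment A B : A \in Ind -> B \in Ind -> (#|A| < #|B|)%N ->
  exists2 x, x \in B :\: A & x |: A \in Ind.
Proof. by case: Ind_matroid => _ _ aug; apply: aug. Qed.

(* A largest independent subset of J containing A cannot be augmented from
   any independent subset of J, so it is a basis of J. *)
Lemma indep_extend A J : A \in Ind -> A \subset J ->
  exists2 C, [&& C \in Ind, A \subset C & C \subset J] & #|C| = mrank Ind J.
Proof.
move=> AI AJ; pose P := [pred C | [&& C \in Ind, A \subset C & C \subset J]].
have PA : P A by rewrite /= AI subxx AJ.
case: (arg_maxnP (fun C => #|C|) PA) => C PC Cmax; exists C => //.
case/and3P: PC => CI AC CJ; apply/eqP; rewrite eqn_leq mrank_ge //=.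
apply/bigmax_leqP => B /andP[BI BJ]; rewrite leqNgt; apply/negP.
case/(indep_augment CI BI) => x /setDP[xB xC] xCI.
have : (#|x |: C| <= #|C|)%N.
  apply: Cmax; rewrite /= xCI subUset sub1set (subsetP BJ) // CJ.
  by rewrite (subset_trans AC) ?subsetUr.
by rewrite cardsU1 xC ltnn.
Qed.

Lemma mrank_set1 (i : E) : mrank Ind [set i] = ([set i] \in Ind).
Proof.
apply: mrankP.
  case: (boolP ([set i] \in Ind)) => [iI|_].
    by exists [set i]; rewrite ?iI ?subxx ?cards1.
  by exists set0; rewrite ?set0_indep ?sub0set ?cards0.
move=> B BI; rewrite subset1 => /orP[/eqP Bi|/eqP ->]; last by rewrite cards0.
by rewrite Bi in BI *; rewrite BI cards1.
Qed.

Lemma mrank_contract_loop (i : E) J : [set i] \notin Ind ->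
  mrank (mcontract Ind i) (J :\ i) = mrank Ind J.
Proof.
move=> loop; rewrite /mcontract (negbTE loop) mrank_delete ?setD11 //.
apply: eq_bigl => B; case: (boolP (B \in Ind)) => //= BI.
rewrite subsetD1; case: (boolP (i \in B)) => [iB|]; rewrite ?andbT ?andbF //.
by move: iB; rewrite -sub1set => /(indep_sub BI); rewrite (negbTE loop).
Qed.

Lemma mrank_contract_nonloop (i : E) J : [set i] \in Ind -> i \in J ->
  (mrank (mcontract Ind i) (J :\ i)).+1 = mrank Ind J.
Proof.
move=> iI iJ; rewrite /mcontract iI; have iJ' : [set i] \subset J by rewrite sub1set.
have [C /and3P[CI /[!sub1set] iC CJ]] := indep_extend iI iJ'.
rewrite (cardsD1 i) iC add1n => Cn; rewrite -Cn; congr _.+1; apply: mrankP.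
  by exists (C :\ i); rewrite // inE setD11 setD1K // CI setSD.
move=> B /[!inE] /andP[iB iBI] BJ; rewrite -ltnS Cn.
apply: leq_trans (mrank_ge iBI _); first by rewrite cardsU1 iB.
by rewrite subUset sub1set iJ (subset_trans BJ) ?subD1set.
Qed.

Lemma mrank_contract1 (i : E) J : i \in J ->
  mrank Ind J = (mrank Ind [set i] + mrank (mcontract Ind i) (J :\ i))%N.
Proof.
rewrite mrank_set1; case: (boolP ([set i] \in Ind)) => [iI iJ|loop _].
  by rewrite add1n mrank_contract_nonloop.
by rewrite add0n mrank_contract_loop.
Qed.

End Matroid.
End MatroidRank.

Section IndicatorVectors.
Variable E : finType.
Implicit Types A B : {set E}.

Lemma eI0 : eI (set0 : {set E}) = 0.
Proof. by apply/ffunP => j; rewrite !ffunE inE. Qed.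

Lemma eIU A B : [disjoint A & B] -> eI (A :|: B) = eI A + eI B.
Proof.
move=> AB; apply/ffunP => j; rewrite !ffunE in_setU.
by case: (boolP (j \in A)) => [/(disjointFr AB) ->|]; rewrite ?addr0.
Qed.

End IndicatorVectors.

Lemma mrank_flock_contract1 (E : finType) (d : nat)
    (M : {ffun E -> int} -> {set {set E}}) (hM : matroid_flock d M)
    (alpha : {ffun E -> int}) (i : E) (J : {set E}) : i \in J ->
  mrank (M alpha) J = (mrank (M alpha) [set i] + mrank (M (alpha + eI [set i])%R) (J :\ i))%N.
Proof.
case: hM => matroid contract _ iJ.
by rewrite (mrank_contract1 (matroid alpha).1 iJ) contract mrank_delete ?setD11.
Qed.

Theorem mainTheorem9 (E : finType) (d : nat)
    (M : {ffun E -> int} -> {set {set E}}) (hM : matroid_flock d M)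
    (alpha : {ffun E -> int}) (I J : {set E}) (hIJ : I \subset J) :
  mrank (M alpha) J = (mrank (M alpha) I + mrank (M (alpha + eI I)%R) (J :\: I))%N.
Proof.
have [n] := ubnP #|I|; elim: n alpha I J hIJ => // n IH alpha I J IJ ltIn.
have [-> | [i iI]] := set_0Vmem I; first by rewrite eI0 addr0 setD0 mrank_set0.
rewrite (mrank_flock_contract1 hM _ (subsetP IJ i iI)) (mrank_flock_contract1 hM _ iI).
rewrite (IH _ (I :\ i) (J :\ i)) ?setSD ?(leq_trans (proper_card (properD1 iI))) //.
by rewrite addnA -addrA -eIU ?disjoints1 ?setD11 // setD1K // setDDl setD1K.
Qed.
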